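(* Let $K,L,N$ be positive integers and $t$, $n\ge 2$ integers with $K=nt+(n-1)L$ and $L\ge t$, and consider a $(K,L,M,N)$ multi-antenna coded caching system with $\frac{M}{N}=\frac{t}{K}$. Then the delivery time $$T^*=\frac{K-t}{t+L}=n-1$$ is achievable by a scheme with subpacketization number $\frac{K}{\gcd(K,t,L)}$.
   Context: $(K,L,M,N)$ multi-antenna coded caching system: a server holds $N$ files $W_1,\dots,W_N$, each of size one unit, and has $L$ transmit antennas; it serves $K$ single-antenna users over a MISO broadcast channel of capacity one file per unit time. User $k$ has a cache of size $M$ units ($0\le M\le N$). In the placement phase (before demands are known) the server fills caches with uncoded file content. In the delivery phase each user $k$ requests a file $W_{d_k}$; the server sends vectors $\mathbf{x}(\tau)\in\mathbb{C}^L$ and user $k$ receives $y_k(\tau)=\mathbf{h}_k^T\mathbf{x}(\tau)+w_k(\tau)$ with $\mathbf{h}_k\in\mathbb{C}^L$ its channel vector; all nodes have perfect channel knowledge, the channel vectors are generic, and the high-SNR regime is considered (noise neglected). A scheme is correct if every user recovers its requested file from its cache and received signals, for every demand vector. The subpacketization number is the number of equal-size subfiles into which each file is split; if each file is split into $F$ subfiles and the delivery consists of $S'$ transmissions each of size $1/F$ file, the delivery time is $T=S'/F$. ''Achievable'' means such a correct scheme exists for every demand vector with that delivery time. *)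

From HB Require Import structures.
From mathcomp Require Import all_boot all_order all_algebra.
From mathcomp Require Import complex Rstruct.
From mathcomp Require Import mpoly.
From Stdlib Require Import Reals.

Set Implicit Arguments.
Unset Strict Implicit.
Unset Printing Implicit Defensive.

Import Order.TTheory GRing.Theory Num.Theory.
Local Open Scope ring_scope.

Definition C : numClosedFieldType := (Rdefinitions.R)[i].

(* A subfile is indexed by (file index n, subfile index j) : 'I_N * 'I_F.
   A library realization assigns a complex symbol to every subfile
   (high-SNR / DoF abstraction: each subfile of size 1/F is one symbol,
   one transmission of size 1/F carries one symbol per antenna). *)
Definition library (N F : nat) := 'I_N * 'I_F -> C.

Definition transmit (N F S L : nat) (V : 'I_S -> 'I_N * 'I_F -> 'cV[C]_L)
  (W : library N F) (tau : 'I_S) : 'cV[C]_L :=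
  \sum_(p : 'I_N * 'I_F) W p *: V tau p.

(* Received signal of user k: y_k(tau) = h_k^T x(tau), where h_k^T is row k
   of the channel matrix H (noise neglected). *)
Definition received (K L N F S : nat) (H : 'M[C]_(K, L))
  (V : 'I_S -> 'I_N * 'I_F -> 'cV[C]_L) (W : library N F)
  (k : 'I_K) (tau : 'I_S) : C :=
  (row k H *m transmit V W tau) 0 0.

(* User k can recover its requested file W_{d_k} from its cache content
   (the values of the cached subfiles) and its received signals: the
   requested file is a function of these observations. *)
Definition decodable (K L N F S : nat) (H : 'M[C]_(K, L))
  (Z : 'I_K -> {set 'I_N * 'I_F}) (d : 'I_K -> 'I_N)
  (V : 'I_S -> 'I_N * 'I_F -> 'cV[C]_L) (k : 'I_K) : Prop :=
  forall W W' : library N F,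
    (forall p, p \in Z k -> W p = W' p) ->
    (forall tau, received H V W k tau = received H V W' k tau) ->
    forall j : 'I_F, W (d k, j) = W' (d k, j).

Definition chan_coords (K L : nat) (H : 'M[C]_(K, L)) : 'I_(K * L) -> C :=
  fun i => mxvec H 0 i.

(* A correct scheme with subpacketization F and S transmissions (each of
   size 1/F) exists: an uncoded placement Z (user k caches the subfiles in
   Z k, at most M*F of them, i.e. at most M units), fixed before demands and
   channels are known, such that for generic channels (all H outside the zero
   set of a nonzero polynomial in the channel coefficients) and for every
   demand vector d there is a delivery letting every user decode. *)
Definition scheme_exists (K L N : nat) (M : rat) (F S : nat) : Prop :=
  exists Z : 'I_K -> {set 'I_N * 'I_F},
    (forall k, (#|Z k|)%:R <= M * F%:R) /\
    exists P : {mpoly C[K * L]},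
      P != 0 /\
      forall H : 'M[C]_(K, L),
        (P.@[chan_coords H] != 0) ->
        forall d : 'I_K -> 'I_N,
          exists V : 'I_S -> 'I_N * 'I_F -> 'cV[C]_L,
            forall k, decodable H Z d V k.

Definition achievable (K L N : nat) (M : rat) (F : nat) (T : rat) : Prop :=
  exists S : nat, S%:R / F%:R = T /\ scheme_exists K L N M F S.

(* Split every file into Kp = K/g subfiles, g = gcd(K, t, L), and write
   tp = t/g, Lp = L/g, so that Kp = tp + (n-1)(tp + Lp).  User u caches
   subfile j of every file iff the cyclic distance (u - j) mod Kp is below tp,
   i.e. a fraction tp/Kp = t/K of the library.  There are (n-1) Kp
   transmissions (k, j), k < n-1: with c_k = tp + k (tp + Lp), the users at
   distance r < tp from j receive subfile j + c_k and those at distance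
   c_k <= r < c_k + Lp receive subfile j.  The served users lacking a given
   transmitted subfile occupy at most Lp residues mod Kp, so there are at most
   L of them.  So when all L x L minors of the channel matrix are nonzero (a
   generic condition) a zero-forcing beam delivers it to its user and nulls it
   at every other served user lacking it; the remaining interference is cached.
   Every uncached subfile is delivered by some transmission, which gives
   delivery time (n-1) Kp / Kp = n - 1 with subpacketization Kp. *)

From mathcomp Require Import all_boot all_order all_algebra.
From mathcomp Require Import complex Rstruct mpoly.
From mathcomp Require Import zify ring.

Set Implicit Arguments.
Unset Strict Implicit.
Unset Printing Implicit Defensive.

Import GRing.Theory Num.Theory.

(* (u - j) mod n for j < n, avoiding the truncated subtraction u - j. *)
Definition cyc_offset (n j u : nat) : nat := (u + (n - j)) %% n.

Lemma cyc_offset_lt n j u : 0 < n -> cyc_offset n j u < n.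
Proof. exact: ltn_pmod. Qed.

Lemma cyc_offsetK n j u : j < n -> cyc_offset n j u + j = u %[mod n].
Proof. by move=> jn; rewrite modnDml -addnA subnK ?(ltnW jn) // modnDr. Qed.

Lemma cyc_offset_eq n j u r :
  j < n -> r < n -> r + j = u %[mod n] -> cyc_offset n j u = r.
Proof.
move=> jn rn ru; rewrite /cyc_offset -modnDml -ru modnDml -addnA subnKC ?(ltnW jn) //.
by rewrite modnDr modn_small.
Qed.

Lemma cyc_offset_eq_mod n j x y :
  j < n -> cyc_offset n j x = cyc_offset n j y -> x = y %[mod n].
Proof. by move=> jn eq_xy; rewrite -(cyc_offsetK x jn) -(cyc_offsetK y jn) eq_xy. Qed.

Lemma cyc_offset_inj n (i j : 'I_n) u : cyc_offset n i u = cyc_offset n j u -> i = j.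
Proof.
move=> eq_ij; apply: val_inj => /=.
have /eqP := etrans (cyc_offsetK u (ltn_ord i)) (esym (cyc_offsetK u (ltn_ord j))).
by rewrite eq_ij eqn_modDl !modn_small // => /eqP.
Qed.

Definition ord_shift n (j : 'I_n) (c : nat) : 'I_n :=
  Ordinal (ltn_pmod (j + c) (leq_ltn_trans (leq0n j) (ltn_ord j))).

Lemma ord_shiftD n (j : 'I_n) a b : ord_shift (ord_shift j a) b = ord_shift j (a + b).
Proof. by apply: val_inj; rewrite /= modnDml addnA. Qed.

Lemma ord_shift_id n (j : 'I_n) : ord_shift j n = j.
Proof. by apply: val_inj; rewrite /= modnDr modn_small. Qed.

Lemma cyc_offset_shift n (j : 'I_n) c u :
  c <= n -> cyc_offset n (ord_shift j c) u = (cyc_offset n j u + (n - c)) %% n.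
Proof.
move=> cn; have n_gt0 : 0 < n by apply: leq_ltn_trans (ltn_ord j).
apply: cyc_offset_eq; rewrite ?ltn_pmod //=.
rewrite modnDml modnDmr -(cyc_offsetK u (ltn_ord j)).
by rewrite (_ : _ + _ + _ = cyc_offset n j u + j + n) ?modnDr //; lia.
Qed.

Lemma card_le_inj_bounded (T : finType) (A : {pred T}) (f : T -> nat) b :
  {in A &, injective f} -> {in A, forall x, f x < b} -> #|A| <= b.
Proof.
move=> inj_f f_lt.
have uniq_fA : uniq (map f (enum A)).
  by rewrite map_inj_in_uniq ?enum_uniq // => x y; rewrite !mem_enum; apply: inj_f.
rewrite cardE -(size_map f) -[b](size_iota 0); apply: uniq_leq_size uniq_fA _.
by move=> y /mapP [x]; rewrite mem_enum => xA ->; rewrite mem_iota f_lt.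
Qed.

Lemma euclid_unique b a a' q q' :
  a < b -> a' < b -> a + b * q = a' + b * q' -> a = a' /\ q = q'.
Proof. by move=> a_lt a'_lt e; case: (ltngtP q q') => [?|?|?]; [nia|nia|split; lia]. Qed.

Section ZeroForcing.

Local Open Scope ring_scope.

Definition chan_mx (K L : nat) : 'M[{mpoly C[K * L]}]_(K, L) :=
  \matrix_(i, j) 'X_(mxvec_index i j).

Lemma map_chan_mx K L (H : 'M[C]_(K, L)) :
  map_mx (meval (chan_coords H)) (chan_mx K L) = H.
Proof. by apply/matrixP => i j; rewrite !mxE mevalXU /chan_coords mxvecE. Qed.

Lemma meval_minor K L (H : 'M[C]_(K, L)) (f : 'I_L -> 'I_K) :
  (\det (rowsub f (chan_mx K L))).@[chan_coords H] = \det (rowsub f H).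
Proof. by rewrite -det_map_mx map_mxsub map_chan_mx. Qed.

Definition full_minors_poly (K L : nat) : {mpoly C[K * L]} :=
  \prod_(f : {ffun 'I_L -> 'I_K} | injectiveb f) \det (rowsub f (chan_mx K L)).

Lemma full_minors_poly_neq0 K L : full_minors_poly K L != 0.
Proof.
rewrite prodf_seq_neq0; apply/allP => f _; apply/implyP => /injectiveP injf.
pose H0 : 'M[C]_(K, L) := \matrix_(k, j) (k == f j)%:R.
have H0f : rowsub f H0 = 1%:M.
  by apply/matrixP => i j; rewrite !mxE (inj_eq injf).
apply: contra_neq (oner_neq0 C) => minor0.
by rewrite -(det1 C L) -H0f -meval_minor minor0 meval0.
Qed.

Lemma full_minors_neq0 K L (H : 'M[C]_(K, L)) :
  (full_minors_poly K L).@[chan_coords H] != 0 ->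
  forall f : {ffun 'I_L -> 'I_K}, injective f -> \det (rowsub f H) != 0.
Proof.
rewrite rmorph_prod prodf_seq_neq0 => /allP minors f /injectiveP injf.
by rewrite -meval_minor; have := minors f (mem_index_enum _); rewrite injf.
Qed.

Lemma extend_to_uniq_tuple (T : finType) (S : {set T}) n :
  (#|S| <= n <= #|T|)%N -> exists2 s : n.-tuple T, uniq s & {subset S <= s}.
Proof.
case/andP=> Sn nT.
have : (n - #|S| <= #|~: S|)%N by have := cardsC S; lia.
case/card_geqP => s [uniq_s size_s sub_s].
have size_Ss : size (enum S ++ s) == n by rewrite size_cat -cardE size_s; lia.
exists (Tuple size_Ss) => [|x xS]; last by rewrite mem_cat mem_enum xS.
rewrite cat_uniq enum_uniq uniq_s andbT /=; apply/hasPn => x /sub_s.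
by rewrite in_setC mem_enum.
Qed.

Lemma zero_forcing K L (H : 'M[C]_(K, L)) (S : {set 'I_K}) w :
  (forall f : {ffun 'I_L -> 'I_K}, injective f -> \det (rowsub f H) != 0) ->
  (L <= K)%N -> w \in S -> (#|S| <= L)%N ->
  exists v : 'cV[C]_L, (row w H *m v) 0 0 = 1 /\
    {in S, forall x, x != w -> (row x H *m v) 0 0 = 0}.
Proof.
move=> minors LK wS SL.
have [s /tuple_uniqP inj_s S_s] : exists2 s : L.-tuple 'I_K, uniq s & {subset S <= s}.
  by apply: extend_to_uniq_tuple; rewrite SL card_ord.
pose f := [ffun i => tnth s i].
have inj_f : injective f by move=> i j; rewrite !ffunE => /inj_s.
have Hf_unit : rowsub f H \in unitmx by rewrite unitmxE unitfE minors.
have [i0 ->] := tnthP _ _ (S_s w wS).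
exists (invmx (rowsub f H) *m delta_mx i0 0).
have gain i : (row (tnth s i) H *m (invmx (rowsub f H) *m delta_mx i0 0)) 0 0
              = (i == i0)%:R.
  have -> : row (tnth s i) H = row i (rowsub f H) by rewrite row_rowsub ffunE.
  rewrite mulmxA -row_mul mulmxV //.
  by rewrite -row_mul mul1mx !mxE eqxx andbT eq_sym.
split=> [|x /S_s /tnthP [i ->] neq_i]; first by rewrite gain eqxx.
by rewrite gain; case: (i =P i0) neq_i => [->|]; rewrite ?eqxx.
Qed.

End ZeroForcing.

Section DesignToScheme.

Local Open Scope ring_scope.

Variables (K L N F : nat) (M : rat) (T : finType).
Variable cached : 'I_K -> 'I_F -> bool.
(* In transmission tau, each served user w receives subfile sent tau w of the
   file it requests. *)
Variable served : T -> 'I_K -> bool.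
Variable sent : T -> 'I_K -> 'I_F.

Definition cache_of u : {set 'I_N * 'I_F} := [set p | cached u p.2].

Definition interferers tau w := [set x | served tau x & ~~ cached x (sent tau w)].

Definition zero_forcing_beam (H : 'M[C]_(K, L)) tau w (v : 'cV[C]_L) : Prop :=
  (row w H *m v) 0 0 = 1 /\
  {in interferers tau w, forall x, x != w -> (row x H *m v) 0 0 = 0}.

Hypothesis cache_size : forall u, #|cache_of u|%:R <= M * F%:R.
Hypothesis sent_uncached : forall tau w, served tau w -> ~~ cached w (sent tau w).
Hypothesis interferers_le : forall tau w, served tau w -> (#|interferers tau w| <= L)%N.
Hypothesis delivery_complete : forall u j, ~~ cached u j ->
  exists2 tau, served tau u & sent tau u = j.
Hypothesis L_le_K : (L <= K)%N.

Lemma zero_forcing_beams (H : 'M[C]_(K, L)) :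
  (forall f : {ffun 'I_L -> 'I_K}, injective f -> \det (rowsub f H) != 0) ->
  exists beam : T -> 'I_K -> 'cV[C]_L,
    forall tau w, served tau w -> zero_forcing_beam H tau w (beam tau w).
Proof.
move=> minors; suff /fin_all_exists [beam beam_zf] : forall q : T * 'I_K,
    exists v, served q.1 q.2 -> zero_forcing_beam H q.1 q.2 v.
  by exists (fun tau w => beam (tau, w)) => tau w; apply: (beam_zf (tau, w)).
move=> [tau w] /=; case served_w: (served tau w); last by exists 0.
have w_int : w \in interferers tau w by rewrite inE served_w sent_uncached.
have [v zf] := zero_forcing minors L_le_K w_int (interferers_le served_w).
by exists v.
Qed.

Section Delivery.

Variable H : 'M[C]_(K, L).
Variable beam : T -> 'I_K -> 'cV[C]_L.
Hypothesis beam_zf : forall tau w, served tau w -> zero_forcing_beam H tau w (beam tau w).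
Variable d : 'I_K -> 'I_N.

Definition precoders (i : 'I_#|T|) (p : 'I_N * 'I_F) : 'cV[C]_L :=
  let tau := enum_val i in
  \sum_(w | served tau w && ((d w, sent tau w) == p)) beam tau w.

Lemma received_precoders W k i : let tau := enum_val i in
  received H precoders W k i =
  \sum_(w | served tau w) W (d w, sent tau w) * (row k H *m beam tau w) 0 0.
Proof.
move=> tau; rewrite /received /transmit /precoders -/tau.
under eq_bigr => p _ do rewrite scaler_sumr.
rewrite (exchange_big_dep (served tau)) /=; last by move=> p w _ /andP[].
rewrite (eq_bigr (fun w => W (d w, sent tau w) *: beam tau w)) => [|w served_w].
  by rewrite mulmx_sumr summxE; apply: eq_bigr => w _; rewrite -scalemxAr mxE.
by rewrite (big_pred1 (d w, sent tau w)) // => p; rewrite served_w eq_sym.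
Qed.

Lemma precoders_decodable k : decodable H cache_of d precoders k.
Proof.
move=> W W' sameW sameY j.
case cached_kj: (cached k j); first by apply: sameW; rewrite inE.
have [tau served_k sent_k] := delivery_complete (negbT cached_kj).
have := sameY (enum_rank tau); rewrite !received_precoders enum_rankK.
rewrite (bigD1 k served_k) [in RHS](bigD1 k served_k) /=.
have [-> _] := beam_zf served_k; rewrite !mulr1 sent_k.
set R := \sum_(w | _) _; set R' := \sum_(w | _) _.
suff -> : R = R' by move/addIr.
apply: eq_bigr => w /andP[served_w neq_w].
case cached_kw: (cached k (sent tau w)); first by rewrite sameW // inE.
have k_int : k \in interferers tau w by rewrite inE served_k cached_kw.
have [_ zf] := beam_zf served_w.
by rewrite zf ?mulr0 // eq_sym.
Qed.

End Delivery.

Theorem scheme_of_design : scheme_exists K L N M F #|T|.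
Proof.
exists cache_of; split => //.
exists (full_minors_poly K L); split; first exact: full_minors_poly_neq0.
move=> H /full_minors_neq0 /zero_forcing_beams [beam beam_zf] d.
by exists (precoders beam d) => k; apply: precoders_decodable.
Qed.

End DesignToScheme.
Section CyclicDesign.

Variables (K N g tp Lp m : nat).
Local Notation Kp := (tp + m.+1 * (tp + Lp)).
Local Notation offset := (cyc_offset Kp).
Hypothesis K_eq : K = g * Kp.
Hypothesis tp_le_Lp : tp <= Lp.
Hypothesis Lp_gt0 : 0 < Lp.

Definition block_start (k : nat) : nat := tp + k * (tp + Lp).

Definition cyc_cached (u : 'I_K) (j : 'I_Kp) : bool := offset j u < tp.

Definition cyc_served (tau : 'I_m.+1 * 'I_Kp) (u : 'I_K) : bool :=
  let c := block_start tau.1 in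
  (offset tau.2 u < tp) || (c <= offset tau.2 u < c + Lp).

Definition cyc_sent (tau : 'I_m.+1 * 'I_Kp) (u : 'I_K) : 'I_Kp :=
  if offset tau.2 u < tp then ord_shift tau.2 (block_start tau.1) else tau.2.

Lemma Kp_gt0 : 0 < Kp.
Proof. lia. Qed.

Lemma block_end_le (k : 'I_m.+1) : block_start k + (tp + Lp) <= Kp.
Proof. have := ltn_ord k; rewrite /block_start; nia. Qed.

Lemma card_cyc_cache u : #|cache_of N cyc_cached u| <= N * tp.
Proof.
apply: (card_le_inj_bounded (f := fun p : 'I_N * 'I_Kp => p.1 + N * offset p.2 u)).
  by move=> [i j] [i' j'] _ _ /= /euclid_unique[] // /val_inj -> /cyc_offset_inj ->.
by move=> [i j]; rewrite inE /cyc_cached /= => ?; have := ltn_ord i; nia.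
Qed.

Lemma cyc_sent_uncached tau w : cyc_served tau w -> ~~ cyc_cached w (cyc_sent tau w).
Proof.
case: tau => k j; rewrite /cyc_served /cyc_cached /cyc_sent /= -leqNgt.
have end_le := block_end_le k; have off_lt := cyc_offset_lt j w Kp_gt0.
rewrite /block_start in end_le *.
case: ifP => [early _|_ /andP[start_le _]]; last by lia.
by rewrite cyc_offset_shift ?modn_small; lia.
Qed.

Lemma card_window (A : {set 'I_K}) (j : 'I_Kp) lo c : lo <= Lp ->
  {in A, forall x : 'I_K, (offset j x < lo) || (c + lo <= offset j x < c + Lp)} ->
  #|A| <= Lp * g.
Proof.
(* A user is determined by its offset from j and its block x %/ Kp. *)
move=> lo_le A_win; pose phi r := if r < lo then r else r - c.
have phi_lt : {in A, forall x : 'I_K, phi (offset j x) < Lp}.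
  by move=> x /A_win; rewrite /phi; case: ifP => //; lia.
apply: (card_le_inj_bounded (f := fun x : 'I_K => phi (offset j x) + Lp * (x %/ Kp))).
  move=> x y xA yA /euclid_unique[]; rewrite ?phi_lt // => phi_eq div_eq.
  have off_eq : offset j x = offset j y.
    by move: (A_win x xA) (A_win y yA) phi_eq; rewrite /phi; case: ifP; case: ifP; lia.
  apply: ord_inj; rewrite (divn_eq x Kp) (divn_eq y Kp) div_eq.
  by rewrite (cyc_offset_eq_mod (ltn_ord j) off_eq).
move=> x xA; have : x %/ Kp < g by rewrite ltn_divLR ?Kp_gt0 // -K_eq.
by have := phi_lt x xA; nia.
Qed.

Lemma card_cyc_interferers tau w : cyc_served tau w ->
  #|interferers cyc_cached cyc_served cyc_sent tau w| <= Lp * g.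
Proof.
case: tau => k j served_w.
apply: (card_window (j := j) (lo := if offset j w < tp then tp else 0) (c := block_start k)).
  by case: ifP.
move=> x; rewrite inE /cyc_served /cyc_cached /cyc_sent /= -leqNgt.
have end_le := block_end_le k; rewrite /block_start in end_le *.
case: ifP => _ /andP[served_x]; last by lia.
case/orP: served_x => [-> // | /andP[start_le end_lt]].
rewrite cyc_offset_shift; last by lia.
by rewrite (_ : _ + _ = offset j x - (tp + k * (tp + Lp)) + Kp) ?modnDr ?modn_small; lia.
Qed.

Lemma cyc_delivery_complete u j : ~~ cyc_cached u j ->
  exists2 tau, cyc_served tau u & cyc_sent tau u = j.
Proof.
(* Write the offset as c_k + r.  If r < Lp, u is served j in (k, j); otherwise
   u is at offset r - Lp < tp from j' = j + c_k + Lp and is served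
   j' + c_(m-k) = j + Kp in (m - k, j'). *)
rewrite /cyc_cached -leqNgt => uncached.
have off_lt := cyc_offset_lt j u Kp_gt0.
pose k := (offset j u - tp) %/ (tp + Lp); pose r := (offset j u - tp) %% (tp + Lp).
have off_eq : offset j u = block_start k + r.
  by rewrite /block_start /k /r -addnA -divn_eq; lia.
have k_lt : k < m.+1 by rewrite ltn_divLR; lia.
have r_lt : r < tp + Lp by rewrite ltn_mod; lia.
case: (ltnP r Lp) => [r_lt_Lp | Lp_le_r].
  exists (Ordinal k_lt, j); rewrite /cyc_served /cyc_sent /= off_eq.
    by apply/orP; right; lia.
  by rewrite ifN // -leqNgt -off_eq.
have mk_lt : m - k < m.+1 by lia.
have end_le := block_end_le (Ordinal k_lt); rewrite /= in end_le.
pose j' := ord_shift j (block_start k + Lp).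
have off' : offset j' u = r - Lp.
  rewrite cyc_offset_shift; last by lia.
  by rewrite (_ : _ + _ = r - Lp + Kp) ?modnDr ?modn_small; lia.
exists (Ordinal mk_lt, j'); rewrite /cyc_served /cyc_sent /= off'.
  by apply/orP; left; lia.
rewrite ifT; last by lia.
rewrite ord_shiftD -[RHS]ord_shift_id; congr ord_shift.
rewrite /block_start; have : k * (tp + Lp) + (m - k) * (tp + Lp) = m * (tp + Lp).
  by rewrite -mulnDl subnKC // -ltnS.
lia.
Qed.

End CyclicDesign.

Local Open Scope ring_scope.

Lemma delivery_time K L t n : (0 < L)%N -> (1 <= n)%N ->
  K = (n * t + (n - 1) * L)%N ->
  (K%:R - t%:R) / (t + L)%:R = (n - 1)%N%:R :> rat.
Proof.
move=> L_gt0 n_ge1 K_eq.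
have -> : K = (t + (n - 1) * (t + L))%N by rewrite K_eq; nia.
by rewrite natrD addrAC subrr add0r natrM mulfK // pnatr_eq0; lia.
Qed.

Lemma divn_design_params K L t m g : (0 < g)%N -> (g %| t)%N -> (g %| L)%N ->
  (0 < L)%N -> (t <= L)%N -> K = (m.+2 * t + m.+1 * L)%N ->
  [/\ (K %/ g = t %/ g + m.+1 * (t %/ g + L %/ g))%N, (0 < L %/ g)%N
    & (t %/ g <= L %/ g)%N].
Proof.
move=> g_gt0 gt gL L_gt0 t_le_L ->; split; last exact: leq_div2r.
  by rewrite divnDl ?dvdn_mull // -!muln_divA //; ring.
by rewrite divn_gt0 // dvdn_leq.
Qed.

Lemma cache_budget (M : rat) N K t g : (0 < N)%N -> (0 < K)%N -> (g %| K)%N -> (g %| t)%N ->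
  M / N%:R = t%:R / K%:R -> M * (K %/ g)%:R = (N * (t %/ g))%:R.
Proof.
move=> N_gt0 K_gt0 gK gt eM.
have g_gt0 : (0 < g)%N by apply: dvdn_gt0 gK.
have M_eq : M = N%:R * (t%:R / K%:R) by rewrite -eM mulrC divfK // pnatr_eq0 -lt0n.
have Kg_gt0 : (0 < K %/ g)%N by rewrite divn_gt0 // dvdn_leq.
rewrite M_eq natrM.
have -> : t%:R = (t %/ g)%:R * g%:R :> rat by rewrite -natrM divnK.
have -> : K%:R = (K %/ g)%:R * g%:R :> rat by rewrite -natrM divnK.
by field; rewrite !pnatr_eq0 -!lt0n g_gt0 Kg_gt0.
Qed.

Theorem theorem3 (K L N : nat) (t n : nat) (M : rat) :
  (0 < K)%N -> (0 < L)%N -> (0 < N)%N -> (2 <= n)%N ->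
  K = (n * t + (n - 1) * L)%N -> (t <= L)%N ->
  M / N%:R = t%:R / K%:R ->
  (K%:R - t%:R) / (t + L)%:R = (n - 1)%N%:R :> rat /\
  achievable K L N M (K %/ gcdn (gcdn K t) L)%N ((K%:R - t%:R) / (t + L)%:R).
Proof.
move=> K_gt0 L_gt0 N_gt0 n_ge2 K_eq t_le_L eM.
have T_eq := delivery_time L_gt0 (ltnW n_ge2) K_eq.
split => //; rewrite T_eq.
have [m n_eq] : exists m, n = m.+2 by exists (n - 2)%N; lia.
rewrite n_eq subn1 /= in K_eq *.
set g := gcdn (gcdn K t) L.
have gK : (g %| K)%N := dvdn_trans (dvdn_gcdl _ _) (dvdn_gcdl _ _).
have gt : (g %| t)%N := dvdn_trans (dvdn_gcdl _ _) (dvdn_gcdr _ _).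
have gL : (g %| L)%N := dvdn_gcdr _ _.
have g_gt0 : (0 < g)%N := dvdn_gt0 K_gt0 gK.
have budget := cache_budget N_gt0 K_gt0 gK gt eM.
have [Kp_eq Lp_gt0 tp_le_Lp] := divn_design_params g_gt0 gt gL L_gt0 t_le_L K_eq.
have K_eq' : K = (g * (t %/ g + m.+1 * (t %/ g + L %/ g)))%N.
  by rewrite -Kp_eq mulnC divnK.
rewrite Kp_eq in budget *.
set tp := (t %/ g)%N in budget K_eq' tp_le_Lp *.
set Lp := (L %/ g)%N in K_eq' Lp_gt0 tp_le_Lp *.
exists #|{: 'I_m.+1 * 'I_(tp + m.+1 * (tp + Lp))}|; split.
  by rewrite card_prod !card_ord natrM mulfK // pnatr_eq0; lia.
apply: (@scheme_of_design _ _ _ _ _ _ (@cyc_cached K tp Lp m) (@cyc_served K tp Lp m)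
          (@cyc_sent K tp Lp m)).
- by move=> u; rewrite budget ler_nat (card_cyc_cache N K_eq' tp_le_Lp Lp_gt0).
- exact: cyc_sent_uncached K_eq' tp_le_Lp Lp_gt0.
- by rewrite -(divnK gL); apply: card_cyc_interferers K_eq' tp_le_Lp Lp_gt0.
- exact: cyc_delivery_complete K_eq' tp_le_Lp Lp_gt0.
- nia.
Qed.
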